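(* $R_{2/2,3}=1+\sqrt3$. Every element of $\Pi_{2/2,3}$ can be written as \[ \psi_a(z)=\frac{\left(\frac13+\frac a2\right)z^2+(a+1)z+1}{\left(-\frac a2-\frac16\right)z^2+az+1},\qquad a\in\mathbb{R}. \] The value $1+\sqrt3$ is attained by $a=-1+\frac{1}{\sqrt3}$, and $R(\psi_a)<1+\sqrt3$ for all $a\ne -1+\frac1{\sqrt3}$.
   Context: A real rational function $\psi$ is always considered in lowest terms, as a smooth function on $\mathbb{R}$ minus its finitely many poles. It is absolutely monotonic at $x\in\mathbb{R}$ if $x$ is not a pole and $\psi^{(k)}(x)\ge 0$ for all integers $k\ge 0$. The radius of absolute monotonicity is $R(\psi)=\sup\big(\{r\in[0,\infty): \psi \text{ is absolutely monotonic at each point of } [-r,0]\}\cup\{0\}\big)\in[0,+\infty]$. For $m,n,p\in\mathbb{N}$, $\Pi_{m/n,p}$ denotes the set of rational functions $\psi=P/Q$ with $P,Q$ real polynomials, $\deg P\le m$, $Q\not\equiv 0$, $\deg Q\le n$, such that $\psi(z)-e^z=O(z^{p+1})$ as $z\to 0$. Finally, $R_{m/n,p}=\sup\{R(\psi):\psi\in\Pi_{m/n,p}\}$. *)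

From Stdlib Require Import Reals Lra List.
Import ListNotations.
Open Scope R_scope.

(* Real polynomials as coefficient lists, lowest degree first. *)
Definition poly := list R.

Fixpoint peval (p : poly) (x : R) : R :=
  match p with
  | [] => 0
  | c :: q => c + x * peval q x
  end.

Definition deg_le (p : poly) (m : nat) : Prop := (length p <= S m)%nat.

Definition poly_nonzero (p : poly) : Prop := exists i, nth i p 0 <> 0.

(* P and Q coprime in R[x] (Bezout identity), i.e. P/Q is in lowest terms. *)
Definition coprime_poly (P Q : poly) : Prop :=
  exists U V : poly, forall x, peval U x * peval P x + peval V x * peval Q x = 1.

Inductive nderiv (U : R -> Prop) : nat -> (R -> R) -> (R -> R) -> Prop :=
| nderiv0 : forall f, nderiv U 0 f f
| nderivS : forall n f g h, nderiv U n f g ->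
    (forall y, U y -> derivable_pt_lim g y (h y)) -> nderiv U (S n) f h.

(* For P0/Q0 in lowest terms: absolutely monotonic at x. Poles = real zeros of Q0. *)
Definition abs_mono_at (P0 Q0 : poly) (x : R) : Prop :=
  let U := fun y => peval Q0 y <> 0 in
  let psi := fun y => peval P0 y / peval Q0 y in
  U x /\
  forall k : nat,
    (exists g, nderiv U k psi g) /\
    (forall g, nderiv U k psi g -> 0 <= g x).

(* psi = P/Q (any representation, Q nonzero) is absolutely monotonic at
   each point of [-r,0]: computed on the lowest-terms representation. *)
Definition am_on (P Q : poly) (r : R) : Prop :=
  exists P0 Q0 : poly,
    coprime_poly P0 Q0 /\ poly_nonzero Q0 /\
    (forall x, peval P0 x * peval Q x = peval P x * peval Q0 x) /\
    (forall x, -r <= x <= 0 -> abs_mono_at P0 Q0 x).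

(* The set whose supremum is R(P/Q): {r >= 0 | am on [-r,0]} ∪ {0}. *)
Definition R_set (P Q : poly) (r : R) : Prop :=
  r = 0 \/ (0 <= r /\ am_on P Q r).

(* P/Q in Pi_{m/n,p}: psi(z) - e^z = O(z^(p+1)) as z -> 0
   (bound on a punctured-by-poles neighbourhood of 0). *)
Definition in_Pi (m n p : nat) (P Q : poly) : Prop :=
  deg_le P m /\ deg_le Q n /\ poly_nonzero Q /\
  exists C delta : R, 0 < delta /\
    forall z, Rabs z < delta -> peval Q z <> 0 ->
      Rabs (peval P z / peval Q z - exp z) <= C * Rabs z ^ (p + 1).

(* The set whose supremum is R_{m/n,p}. *)
Definition Rmnp_set (m n p : nat) (r : R) : Prop :=
  r = 0 \/ exists P Q, in_Pi m n p P Q /\ 0 <= r /\ am_on P Q r.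

Definition Pa (a : R) : poly := [1; a + 1; 1/3 + a/2].
Definition Qa (a : R) : poly := [1; a; - a/2 - 1/6].

Definition a_star : R := -1 + 1 / sqrt 3.

(* For P/Q in Pi_{2/2,3} the Taylor defect P - Q T3 (T3 the cubic
      Taylor polynomial of exp) is O(|Q(z)| z^4) as z -> 0+, so its low coefficients
      vanish (small_poly_coefs); this forces Q(0) <> 0 and P/Q = psi_a with a = q1/q0.
   2. Derivatives.  For a quotient of quadratics, differentiating Q psi = P gives the
      Leibniz recursion Q psi^(k) + k Q' psi^(k-1) + k(k-1) q2 psi^(k-2) = P^(k)
      (quot_deriv).  Higher derivatives on an open set only depend on the function
      there (nderiv_agree), so absolute monotonicity on [-r,0] of any representative
      of psi_a means: no pole of psi_a and all quot_deriv >= 0 on [-r,0] (am_on_derivs).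
   3. Failure for a <> a_star inside (-(1 + sqrt 3), 0]: at 0 when a < a_star (a
      recurrence with non-real characteristic roots), through psi_a' < 0 just right of
      -(1 + sqrt 3) when a_star < a <= 0, and through a pole when a > 0.
   4. For a = a_star, Qa = t^2 with t = 1 - c x and the derivatives have a closed form,
      nonnegative exactly for x >= -(1 + sqrt 3).
   psi_radius_bound collects 3 and 4; the main theorem follows from 1 and it. *)

From Pilot Require Import Defs.
From Stdlib Require Import Reals Lra Lia Psatz List Classical.
From Coquelicot Require Import Coquelicot.
Import ListNotations.
Open Scope R_scope.

Lemma continuity_pt_half_pos (f : R -> R) y : continuity_pt f y -> 0 < f y ->
  exists d, 0 < d /\ forall z, Rabs (z - y) < d -> f y / 2 < f z.
Proof.
  intros Hc Hy.
  destruct (Hc (f y / 2)) as [d [Hd Hnear]]; [lra|].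
  exists d. split; [exact Hd|]. intros z Hz.
  destruct (Req_dec z y) as [->|Hne]; [lra|].
  assert (Hfz : Rabs (f z - f y) < f y / 2)
    by (apply (Hnear z); split; [split; [exact I | congruence] | exact Hz]).
  apply Rabs_lt_between in Hfz. lra.
Qed.

Lemma continuity_pt_nonzero_nbhd (f : R -> R) y : continuity_pt f y -> f y <> 0 ->
  exists d, 0 < d /\ forall z, Rabs (z - y) < d -> f z <> 0.
Proof.
  intros Hc Hy.
  destruct (continuity_pt_half_pos (fun t => Rabs (f t)) y) as [d [Hd Hnear]].
  - exact (continuity_pt_comp f Rabs y Hc (Rcontinuity_abs _)).
  - now apply Rabs_pos_lt.
  - exists d. split; [exact Hd|]. intros z Hz Hfz.
    specialize (Hnear z Hz). rewrite Hfz, Rabs_R0 in Hnear.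
    assert (0 <= Rabs (f y)) by apply Rabs_pos. lra.
Qed.

Lemma continuity_pt_neg_right (f : R -> R) y e : continuity_pt f y -> f y < 0 -> 0 < e ->
  exists x, y < x < y + e /\ f x < 0.
Proof.
  intros Hc Hy He.
  destruct (continuity_pt_half_pos (fun t => - f t) y) as [d [Hd Hnear]].
  - exact (continuity_pt_opp f y Hc).
  - lra.
  - assert (Hm : 0 < Rmin (d / 2) (e / 2)) by (apply Rmin_pos; lra).
    assert (Hmd : Rmin (d / 2) (e / 2) <= d / 2) by apply Rmin_l.
    assert (Hme : Rmin (d / 2) (e / 2) <= e / 2) by apply Rmin_r.
    exists (y + Rmin (d / 2) (e / 2)). split; [lra|].
    enough (- f y / 2 < - f (y + Rmin (d / 2) (e / 2))) by lra.
    apply Hnear. replace (y + Rmin (d / 2) (e / 2) - y) with (Rmin (d / 2) (e / 2)) by ring.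
    rewrite Rabs_right; lra.
Qed.

Lemma derivable_pt_lim_local_ext (f g : R -> R) y l d : 0 < d ->
  (forall z, Rabs (z - y) < d -> f z = g z) ->
  derivable_pt_lim f y l -> derivable_pt_lim g y l.
Proof.
  intros Hd Hfg Hf eps Heps.
  destruct (Hf eps Heps) as [d1 Hd1].
  assert (Hm : 0 < Rmin d d1) by (apply Rmin_pos; [lra | apply (cond_pos d1)]).
  exists (mkposreal _ Hm). intros h Hh0 Hh. simpl in Hh.
  assert (Hhd : Rabs h < d) by (eapply Rlt_le_trans; [exact Hh | apply Rmin_l]).
  rewrite <- (Hfg y), <- (Hfg (y + h)).
  - apply Hd1; [exact Hh0 | eapply Rlt_le_trans; [exact Hh | apply Rmin_r]].
  - now replace (y + h - y) with h by ring.
  - rewrite Rminus_diag, Rabs_R0. lra.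
Qed.

Lemma peval_derivable (p : Defs.poly) y : exists l, derivable_pt_lim (peval p) y l.
Proof.
  induction p as [|c q [l Hl]].
  - exists 0. exact (derivable_pt_lim_const 0 y).
  - eexists. change (peval (c :: q)) with (fun z => c + z * peval q z).
    apply (derivable_pt_lim_plus (fun _ => c) (fun z => z * peval q z)).
    + apply derivable_pt_lim_const.
    + exact (derivable_pt_lim_mult id (peval q) y _ _ (derivable_pt_lim_id y) Hl).
Qed.

Lemma peval_continuity (p : Defs.poly) : continuity (peval p).
Proof.
  intro y. destruct (peval_derivable p y) as [l Hl].
  apply derivable_continuous_pt. exists l. exact Hl.
Qed.

Lemma peval_nonzero_open (p : Defs.poly) : open_set (fun y => peval p y <> 0).
Proof.
  intros y Hy.
  destruct (continuity_pt_nonzero_nbhd (peval p) y (peval_continuity p y) Hy) as [d [Hd Hnear]].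
  exists (mkposreal d Hd). intros z Hz. exact (Hnear z Hz).
Qed.

Lemma quad_repr (p : Defs.poly) : deg_le p 2 ->
  forall x, peval p x = nth 0 p 0 + nth 1 p 0 * x + nth 2 p 0 * x ^ 2.
Proof.
  unfold deg_le. intros Hd x.
  destruct p as [|c0 [|c1 [|c2 [|c3 p]]]]; simpl in *; try lia; ring.
Qed.

Lemma quad_nonzero (p : Defs.poly) : deg_le p 2 -> poly_nonzero p ->
  ~ (nth 0 p 0 = 0 /\ nth 1 p 0 = 0 /\ nth 2 p 0 = 0).
Proof.
  unfold deg_le. intros Hd [i Hi] [H0 [H1 H2]].
  destruct i as [|[|[|i]]]; auto.
  apply Hi, nth_overflow. lia.
Qed.

Lemma quad_three_roots (p : Defs.poly) x y z : deg_le p 2 -> poly_nonzero p ->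
  x <> y -> x <> z -> y <> z ->
  peval p x = 0 -> peval p y = 0 -> peval p z = 0 -> False.
Proof.
  intros Hd Hn Hxy Hxz Hyz Ex Ey Ez. apply (quad_nonzero p Hd Hn).
  rewrite !(quad_repr p Hd) in Ex, Ey, Ez.
  set (c0 := nth 0 p 0) in *. set (c1 := nth 1 p 0) in *. set (c2 := nth 2 p 0) in *.
  (* divided differences of the roots *)
  assert (Dxy : c1 + c2 * (x + y) = 0).
  { apply (Rmult_eq_reg_l (x - y)); [|lra]. rewrite Rmult_0_r. nra. }
  assert (Dxz : c1 + c2 * (x + z) = 0).
  { apply (Rmult_eq_reg_l (x - z)); [|lra]. rewrite Rmult_0_r. nra. }
  assert (H2 : c2 = 0).
  { apply (Rmult_eq_reg_l (y - z)); [|lra]. lra. }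
  assert (H1 : c1 = 0) by (rewrite H2 in Dxy; lra).
  rewrite H1, H2 in Ex. repeat split; lra.
Qed.

Lemma vanish_off_roots (F : R -> R) (q : Defs.poly) :
  (forall y, continuity_pt F y) -> deg_le q 2 -> poly_nonzero q ->
  (forall y, peval q y <> 0 -> F y = 0) -> forall y, F y = 0.
Proof.
  intros Hc Hd Hn HF y.
  apply NNPP. intro Hy.
  destruct (continuity_pt_nonzero_nbhd F y (Hc y) Hy) as [d [Hd0 Hnear]].
  assert (Hroot : forall z, Rabs (z - y) < d -> peval q z = 0).
  { intros z Hz. apply NNPP. intro Hq. exact (Hnear z Hz (HF z Hq)). }
  apply (quad_three_roots q y (y + d / 2) (y - d / 2) Hd Hn); try lra; apply Hroot.
  - rewrite Rminus_diag, Rabs_R0. lra.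
  - replace (y + d / 2 - y) with (d / 2) by ring. rewrite Rabs_right; lra.
  - replace (y - d / 2 - y) with (- (d / 2)) by ring. rewrite Rabs_Ropp, Rabs_right; lra.
Qed.

Lemma quad_root_free_right (q : Defs.poly) y : deg_le q 2 -> poly_nonzero q ->
  exists d, 0 < d /\ forall z, y < z < y + d -> peval q z <> 0.
Proof.
  intros Hd Hn. apply NNPP. intro Hnone.
  assert (Hroot : forall d, 0 < d -> exists z, y < z < y + d /\ peval q z = 0).
  { intros d Hd0. apply NNPP. intro Hz. apply Hnone. exists d. split; [exact Hd0|].
    intros z Hzd Hq. apply Hz. exists z. split; assumption. }
  destruct (Hroot 1) as [z1 [Hz1 E1]]; [lra|].
  destruct (Hroot (z1 - y)) as [z2 [Hz2 E2]]; [lra|].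
  destruct (Hroot (z2 - y)) as [z3 [Hz3 E3]]; [lra|].
  apply (quad_three_roots q z1 z2 z3 Hd Hn); try lra; assumption.
Qed.

Fixpoint coef_abs_sum (p : Defs.poly) : R :=
  match p with [] => 0 | c :: q => Rabs c + coef_abs_sum q end.

Lemma peval_bound (p : Defs.poly) z : Rabs z <= 1 -> Rabs (peval p z) <= coef_abs_sum p.
Proof.
  intros Hz. induction p as [|c q IH]; simpl.
  - rewrite Rabs_R0. lra.
  - eapply Rle_trans; [apply Rabs_triang|]. rewrite Rabs_mult.
    assert (Rabs z * Rabs (peval q z) <= 1 * coef_abs_sum q)
      by (apply Rmult_le_compat; auto; apply Rabs_pos).
    lra.
Qed.

Lemma dominated_by_small_zero c L d : 0 < d ->
  (forall z, 0 < z < d -> Rabs c <= L * z) -> c = 0.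
Proof.
  intros Hd Hdom. apply NNPP. intro Hc.
  assert (Hca : 0 < Rabs c) by now apply Rabs_pos_lt.
  set (L' := Rabs L + 1).
  assert (HL' : 0 < L') by (unfold L'; assert (H := Rabs_pos L); lra).
  set (z := Rmin (d / 2) (Rabs c / (2 * L'))).
  assert (Hz0 : 0 < z) by (apply Rmin_pos; [lra | apply Rdiv_lt_0_compat; lra]).
  assert (Hzd : z <= d / 2) by apply Rmin_l.
  assert (HzL : z * L' <= Rabs c / 2).
  { assert (Hzc : z <= Rabs c / (2 * L')) by apply Rmin_r.
    apply (Rmult_le_compat_r L') in Hzc; [|lra].
    replace (Rabs c / (2 * L') * L') with (Rabs c / 2) in Hzc by (field; lra). exact Hzc. }
  assert (Hb := Hdom z ltac:(lra)).
  assert (L * z <= Rabs L * z) by (apply Rmult_le_compat_r; [lra | apply Rle_abs]).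
  unfold L' in HzL. lra.
Qed.

Lemma small_poly_coefs (m : nat) : forall (p : Defs.poly) K d, 0 < d ->
  (forall z, 0 < z < d -> Rabs (peval p z) <= K * z ^ m) ->
  forall i, (i < m)%nat -> nth i p 0 = 0.
Proof.
  induction m as [|m IH]; intros p K d Hd Hbound i Hi; [lia|].
  destruct p as [|c q]; [destruct i; reflexivity|].
  assert (Hc : c = 0).
  { apply (dominated_by_small_zero c (Rabs K + coef_abs_sum q) (Rmin d 1));
      [apply Rmin_pos; lra|].
    intros z [Hz0 Hz].
    assert (Hzd : z < d) by (eapply Rlt_le_trans; [exact Hz | apply Rmin_l]).
    assert (Hz1 : z < 1) by (eapply Rlt_le_trans; [exact Hz | apply Rmin_r]).
    assert (Hq := peval_bound q z ltac:(rewrite Rabs_right; lra)).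
    assert (Hpow : z ^ m <= 1) by (rewrite <- (pow1 m); apply pow_incr; lra).
    assert (HK : K * z ^ S m <= Rabs K * z).
    { change (z ^ S m) with (z * z ^ m).
      apply Rle_trans with (Rabs K * (z * z ^ m)).
      - apply Rmult_le_compat_r; [apply (pow_le z (S m)); lra | apply Rle_abs].
      - apply Rmult_le_compat_l; [apply Rabs_pos|].
        assert (0 <= z ^ m) by (apply pow_le; lra). nra. }
    assert (Hcq := Hbound z (conj Hz0 Hzd)). simpl peval in Hcq.
    replace c with ((c + z * peval q z) - z * peval q z) by ring.
    eapply Rle_trans; [apply Rabs_triang|].
    rewrite Rabs_Ropp, Rabs_mult, (Rabs_right z) by lra.
    assert (z * Rabs (peval q z) <= z * coef_abs_sum q) by (apply Rmult_le_compat_l; lra).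
    lra. }
  destruct i as [|i]; [exact Hc|].
  apply (IH q K d Hd); [|lia].
  intros z Hz. specialize (Hbound z Hz). simpl peval in Hbound.
  change (z ^ S m) with (z * z ^ m) in Hbound.
  rewrite Hc, Rplus_0_l, Rabs_mult, (Rabs_right z) in Hbound by lra.
  apply (Rmult_le_reg_l z); lra.
Qed.

Lemma mvt_power_bound (f f' : R -> R) M m : 0 <= M -> f 0 = 0 ->
  (forall t, derivable_pt_lim f t (f' t)) ->
  (forall t, Rabs t <= 1 -> Rabs (f' t) <= M * Rabs t ^ m) ->
  forall z, Rabs z <= 1 -> Rabs (f z) <= M * Rabs z ^ S m.
Proof.
  intros HM Hf0 Hd Hb z Hz.
  destruct (MVT_abs f f' 0 z (fun c _ => Hd c)) as [c [Hfc Hc]].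
  rewrite Hf0, !Rminus_0_r in Hfc. rewrite Hfc.
  assert (Hcz : Rabs c <= Rabs z).
  { unfold Rmin, Rmax in Hc.
    destruct (Rle_dec 0 z); [rewrite !Rabs_right | rewrite !Rabs_left1]; lra. }
  assert (Hbc := Hb c ltac:(lra)).
  assert (Hpow : Rabs c ^ m <= Rabs z ^ m) by (apply pow_incr; split; [apply Rabs_pos | exact Hcz]).
  change (Rabs z ^ S m) with (Rabs z * Rabs z ^ m).
  replace (M * (Rabs z * Rabs z ^ m)) with ((M * Rabs z ^ m) * Rabs z) by ring.
  apply Rmult_le_compat_r; [apply Rabs_pos|].
  eapply Rle_trans; [exact Hbc|]. apply Rmult_le_compat_l; assumption.
Qed.

Definition T3 (z : R) : R := 1 + z + z ^ 2 / 2 + z ^ 3 / 6.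

(* Taylor remainder, obtained by integrating the bound exp <= 3 on [-1,1] four times. *)
Lemma exp_T3 z : Rabs z <= 1 -> Rabs (exp z - T3 z) <= 3 * Rabs z ^ 4.
Proof.
  assert (H0 : forall t, Rabs t <= 1 -> Rabs (exp t - 1) <= 3 * Rabs t ^ 1).
  { apply (mvt_power_bound (fun t => exp t - 1) exp 3 0); [lra | rewrite exp_0; ring | |].
    - intro t. apply is_derive_Reals. auto_derive; auto. ring.
    - intros t Ht. simpl. rewrite Rabs_right by (left; apply exp_pos).
      apply Rabs_le_between in Ht.
      assert (exp t <= exp 1)
        by (destruct (Req_dec t 1) as [->|]; [lra | left; apply exp_increasing; lra]).
      assert (exp_le_3 := exp_le_3). lra. }
  assert (H1 : forall t, Rabs t <= 1 -> Rabs (exp t - (1 + t)) <= 3 * Rabs t ^ 2).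
  { apply (mvt_power_bound (fun t => exp t - (1 + t)) (fun t => exp t - 1) 3 1);
      [lra | rewrite exp_0; ring | | exact H0].
    intro t. apply is_derive_Reals. auto_derive; auto. ring. }
  assert (H2 : forall t, Rabs t <= 1 -> Rabs (exp t - (1 + t + t ^ 2 / 2)) <= 3 * Rabs t ^ 3).
  { apply (mvt_power_bound _ (fun t => exp t - (1 + t)) 3 2);
      [lra | rewrite exp_0; field | | exact H1].
    intro t. apply is_derive_Reals. auto_derive; auto. field. }
  apply (mvt_power_bound (fun t => exp t - T3 t) (fun t => exp t - (1 + t + t ^ 2 / 2)) 3 3);
    [lra | unfold T3; rewrite exp_0; field | | exact H2].
  intro t. unfold T3. apply is_derive_Reals. auto_derive; auto. field.
Qed.

Lemma order3_of_defect (P Q E : Defs.poly) : peval Q 0 <> 0 ->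
  (forall z, peval P z - peval Q z * T3 z = z ^ 4 * peval E z) ->
  exists C delta, 0 < delta /\ forall z, Rabs z < delta -> peval Q z <> 0 ->
    Rabs (peval P z / peval Q z - exp z) <= C * Rabs z ^ (3 + 1).
Proof.
  intros HQ0 Hdef.
  set (q := Rabs (peval Q 0)).
  assert (Hq : 0 < q) by now apply Rabs_pos_lt.
  destruct (continuity_pt_half_pos (fun t => Rabs (peval Q t)) 0) as [d [Hd Hnear]];
    [exact (continuity_pt_comp _ Rabs 0 (peval_continuity Q 0) (Rcontinuity_abs _)) | exact Hq |].
  exists (2 * coef_abs_sum E / q + 3), (Rmin d 1).
  split; [apply Rmin_pos; lra|]. intros z Hz HQz.
  assert (Hz1 : Rabs z <= 1) by (left; eapply Rlt_le_trans; [exact Hz | apply Rmin_r]).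
  assert (HQ : q / 2 < Rabs (peval Q z)).
  { apply Hnear. rewrite Rminus_0_r. eapply Rlt_le_trans; [exact Hz | apply Rmin_l]. }
  assert (HE := peval_bound E z Hz1).
  assert (HT := exp_T3 z Hz1).
  assert (Hquot : Rabs (peval E z) / Rabs (peval Q z) <= 2 * coef_abs_sum E / q).
  { replace (2 * coef_abs_sum E / q) with (coef_abs_sum E / (q / 2)) by (field; lra).
    unfold Rdiv. apply Rmult_le_compat; [apply Rabs_pos | | exact HE |].
    - left. apply Rinv_0_lt_compat. lra.
    - apply Rinv_le_contravar; lra. }
  replace (peval P z / peval Q z - exp z)
    with (z ^ 4 * (peval E z / peval Q z) - (exp z - T3 z))
    by (replace (peval P z) with (peval Q z * T3 z + z ^ 4 * peval E z)
          by (rewrite <- Hdef; ring); field; exact HQz).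
  eapply Rle_trans; [apply Rabs_triang|].
  rewrite Rabs_Ropp, Rabs_mult, <- RPow_abs. unfold Rdiv at 1. rewrite Rabs_mult, Rabs_inv.
  assert (Rabs z ^ 4 * (Rabs (peval E z) * / Rabs (peval Q z))
          <= Rabs z ^ 4 * (2 * coef_abs_sum E / q))
    by (apply Rmult_le_compat_l; [apply pow_le, Rabs_pos | exact Hquot]).
  simpl (3 + 1)%nat. lra.
Qed.

Definition taylor_defect (P Q : Defs.poly) : Defs.poly :=
  [nth 0 P 0 - nth 0 Q 0;
   nth 1 P 0 - nth 1 Q 0 - nth 0 Q 0;
   nth 2 P 0 - nth 2 Q 0 - nth 1 Q 0 - nth 0 Q 0 / 2;
   - (nth 2 Q 0 + nth 1 Q 0 / 2 + nth 0 Q 0 / 6);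
   - (nth 1 Q 0 / 6 + nth 2 Q 0 / 2);
   - nth 2 Q 0 / 6].

Lemma taylor_defect_eval (P Q : Defs.poly) z : deg_le P 2 -> deg_le Q 2 ->
  peval (taylor_defect P Q) z = peval P z - peval Q z * T3 z.
Proof.
  intros HP HQ. rewrite (quad_repr P HP), (quad_repr Q HQ).
  unfold taylor_defect, T3. simpl. field.
Qed.

Lemma Pi_defect_bound (P Q : Defs.poly) : in_Pi 2 2 3 P Q ->
  exists K d, 0 <= K /\ 0 < d <= 1 /\ forall z, 0 < z < d ->
    Rabs (peval (taylor_defect P Q) z) <= Rabs (peval Q z) * (K * z ^ 4).
Proof.
  intros [HdP [HdQ [Hn [C [d [Hd Hb]]]]]].
  destruct (quad_root_free_right Q 0 HdQ Hn) as [d2 [Hd2 HQnz]].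
  exists (Rabs C + 3), (Rmin (Rmin d d2) 1).
  assert (Hm1 := Rmin_l (Rmin d d2) 1). assert (Hm2 := Rmin_r (Rmin d d2) 1).
  assert (Hm3 := Rmin_l d d2). assert (Hm4 := Rmin_r d d2).
  split; [assert (H := Rabs_pos C); lra|].
  split; [split; [repeat apply Rmin_pos; lra | exact Hm2]|].
  intros z [Hz0 Hz].
  assert (HQz : peval Q z <> 0) by (apply HQnz; lra).
  assert (Habs : Rabs z = z) by (apply Rabs_right; lra).
  assert (HPQ := Hb z ltac:(rewrite Habs; lra) HQz).
  assert (HE := exp_T3 z ltac:(rewrite Habs; lra)).
  rewrite Habs in HPQ, HE. simpl (3 + 1)%nat in HPQ.
  rewrite taylor_defect_eval by assumption.
  replace (peval P z - peval Q z * T3 z)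
    with (peval Q z * ((peval P z / peval Q z - exp z) + (exp z - T3 z)))
    by (field; exact HQz).
  rewrite Rabs_mult. apply Rmult_le_compat_l; [apply Rabs_pos|].
  eapply Rle_trans; [apply Rabs_triang|].
  assert (C * z ^ 4 <= Rabs C * z ^ 4)
    by (apply Rmult_le_compat_r; [apply pow_le; lra | apply Rle_abs]).
  lra.
Qed.

(* The denominator of an element of Pi_{2/2,3} does not vanish at 0: otherwise
   |Q(z)| = O(z), the defect would be O(z^5), and its coefficients of z^3, z^4
   would force Q = 0. *)
Lemma Pi_Q0_nonzero (P Q : Defs.poly) : in_Pi 2 2 3 P Q -> nth 0 Q 0 <> 0.
Proof.
  intros HPi Hq0.
  destruct (Pi_defect_bound P Q HPi) as [K [d [HK [Hd Hb]]]].
  destruct HPi as [HdP [HdQ [Hn _]]].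
  set (q1 := nth 1 Q 0) in *. set (q2 := nth 2 Q 0) in *.
  assert (Hb5 : forall z, 0 < z < d ->
            Rabs (peval (taylor_defect P Q) z) <= ((Rabs q1 + Rabs q2) * K) * z ^ 5).
  { intros z Hz. eapply Rle_trans; [apply Hb, Hz|].
    assert (HQ : Rabs (peval Q z) <= (Rabs q1 + Rabs q2) * z).
    { rewrite (quad_repr Q HdQ), Hq0. fold q1 q2.
      replace (0 + q1 * z + q2 * z ^ 2) with (z * (q1 + q2 * z)) by ring.
      rewrite Rabs_mult, (Rabs_right z) by lra. rewrite Rmult_comm.
      apply Rmult_le_compat_r; [lra|].
      eapply Rle_trans; [apply Rabs_triang|]. rewrite Rabs_mult, (Rabs_right z) by lra.
      assert (Rabs q2 * z <= Rabs q2) by (assert (H := Rabs_pos q2); nra). lra. }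
    assert (0 <= K * z ^ 4) by (apply Rmult_le_pos; [exact HK | apply pow_le; lra]).
    replace ((Rabs q1 + Rabs q2) * K * z ^ 5) with ((Rabs q1 + Rabs q2) * z * (K * z ^ 4)) by ring.
    apply Rmult_le_compat_r; assumption. }
  assert (Hc := small_poly_coefs 5 _ _ d (proj1 Hd) Hb5).
  assert (E3 := Hc 3%nat ltac:(lia)). assert (E4 := Hc 4%nat ltac:(lia)).
  simpl in E3, E4. rewrite Hq0 in E3. fold q1 q2 in E3, E4.
  apply (quad_nonzero Q HdQ Hn). unfold q1, q2 in *. repeat split; [exact Hq0 | lra | lra].
Qed.

(* Every element of Pi_{2/2,3} is some psi_a: the vanishing of the first four
   coefficients of the defect determines P/Q up to a = q1/q0. *)
Lemma Pi_classification (P Q : Defs.poly) : in_Pi 2 2 3 P Q ->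
  exists a, forall x, peval P x * peval (Qa a) x = peval (Pa a) x * peval Q x.
Proof.
  intros HPi. assert (Hq0 := Pi_Q0_nonzero P Q HPi).
  destruct (Pi_defect_bound P Q HPi) as [K [d [HK [Hd Hb]]]].
  destruct HPi as [HdP [HdQ _]].
  assert (Hb4 : forall z, 0 < z < d ->
            Rabs (peval (taylor_defect P Q) z) <= (coef_abs_sum Q * K) * z ^ 4).
  { intros z Hz. eapply Rle_trans; [apply Hb, Hz|].
    assert (Rabs (peval Q z) <= coef_abs_sum Q)
      by (apply peval_bound; rewrite Rabs_right; lra).
    rewrite Rmult_assoc. apply Rmult_le_compat_r; [|assumption].
    apply Rmult_le_pos; [exact HK | apply pow_le; lra]. }
  assert (Hc := small_poly_coefs 4 _ _ d (proj1 Hd) Hb4).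
  assert (E0 := Hc 0%nat ltac:(lia)). assert (E1 := Hc 1%nat ltac:(lia)).
  assert (E2 := Hc 2%nat ltac:(lia)). assert (E3 := Hc 3%nat ltac:(lia)).
  simpl in E0, E1, E2, E3.
  exists (nth 1 Q 0 / nth 0 Q 0). intro x.
  rewrite (quad_repr P HdP), (quad_repr Q HdQ). unfold Pa, Qa. simpl.
  replace (nth 0 P 0) with (nth 0 Q 0) by lra.
  replace (nth 1 P 0) with (nth 1 Q 0 + nth 0 Q 0) by lra.
  replace (nth 2 P 0) with (nth 2 Q 0 + nth 1 Q 0 + nth 0 Q 0 / 2) by lra.
  replace (nth 2 Q 0) with (- (nth 1 Q 0 / 2 + nth 0 Q 0 / 6)) by lra.
  field. exact Hq0.
Qed.

Lemma nderiv_agree (U : R -> Prop) : open_set U -> forall k f1 f2 g1 g2,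
  (forall y, U y -> f1 y = f2 y) -> nderiv U k f1 g1 -> nderiv U k f2 g2 ->
  forall y, U y -> g1 y = g2 y.
Proof.
  intros HU k. induction k as [|k IH]; intros f1 f2 g1 g2 Hf H1 H2.
  - inversion H1; subst. inversion H2; subst. exact Hf.
  - inversion H1 as [|? ? h1 ? Hn1 Hd1]; subst.
    inversion H2 as [|? ? h2 ? Hn2 Hd2]; subst.
    intros y Hy. destruct (HU y Hy) as [d Hd].
    apply (uniqueness_limite h1 y); [exact (Hd1 y Hy)|].
    apply (derivable_pt_lim_local_ext h2 h1 y _ d (cond_pos d)); [|exact (Hd2 y Hy)].
    intros z Hz. symmetry. exact (IH f1 f2 h1 h2 Hf Hn1 Hn2 z (Hd z Hz)).
Qed.

Definition pder1 (p : Defs.poly) (y : R) : R := nth 1 p 0 + 2 * nth 2 p 0 * y.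

Lemma pder1_spec (p : Defs.poly) y : deg_le p 2 -> derivable_pt_lim (peval p) y (pder1 p y).
Proof.
  intros Hp. apply is_derive_Reals.
  apply (is_derive_ext (fun z => nth 0 p 0 + nth 1 p 0 * z + nth 2 p 0 * z ^ 2)).
  { intro z. symmetry. exact (quad_repr p Hp z). }
  auto_derive; [exact I|]. unfold pder1. ring.
Qed.

Lemma pder1_derivable (p : Defs.poly) y : derivable_pt_lim (pder1 p) y (2 * nth 2 p 0).
Proof. apply is_derive_Reals. unfold pder1. auto_derive; [exact I|]. ring. Qed.

Lemma quot_rule (Q : Defs.poly) (u : R -> R) u' y L : deg_le Q 2 -> peval Q y <> 0 ->
  derivable_pt_lim u y u' -> L = (u' - pder1 Q y * (u y / peval Q y)) / peval Q y ->
  derivable_pt_lim (fun z => u z / peval Q z) y L.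
Proof.
  intros HQ HQy Hu ->.
  replace ((u' - pder1 Q y * (u y / peval Q y)) / peval Q y)
    with ((u' * peval Q y - pder1 Q y * u y) / (peval Q y)²) by (unfold Rsqr; field; exact HQy).
  exact (derivable_pt_lim_div u (peval Q) y u' (pder1 Q y) Hu (pder1_spec Q y HQ) HQy).
Qed.

(* quot_deriv P Q k is the k-th derivative of P/Q when deg P, deg Q <= 2; it is
   obtained by differentiating Q psi = P k times (Leibniz rule):
     Q psi^(k) + k Q' psi^(k-1) + k (k-1) q2 psi^(k-2) = P^(k). *)
Fixpoint quot_deriv (P Q : Defs.poly) (k : nat) : R -> R :=
  match k with
  | 0 => fun y => peval P y / peval Q y
  | S j =>
    match j with
    | 0 => fun y => (pder1 P y - pder1 Q y * quot_deriv P Q j y) / peval Q y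
    | S i => fun y =>
        ((match i with 0 => 2 * nth 2 P 0 | _ => 0 end)
         - INR (S j) * pder1 Q y * quot_deriv P Q j y
         - INR (S j) * INR j * nth 2 Q 0 * quot_deriv P Q i y) / peval Q y
    end
  end.

Lemma quot_deriv_SS (P Q : Defs.poly) k y :
  quot_deriv P Q (S (S k)) y =
  ((match k with 0 => 2 * nth 2 P 0 | _ => 0 end)
   - INR (S (S k)) * pder1 Q y * quot_deriv P Q (S k) y
   - INR (S (S k)) * INR (S k) * nth 2 Q 0 * quot_deriv P Q k y) / peval Q y.
Proof. reflexivity. Qed.

Section QuadraticQuotient.
Variables P Q : Defs.poly.
Hypotheses (HP : deg_le P 2) (HQ : deg_le Q 2).

Lemma quot_deriv_derivable k y : peval Q y <> 0 ->
  derivable_pt_lim (quot_deriv P Q k) y (quot_deriv P Q (S k) y).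
Proof.
  intros HQy.
  assert (H0 : derivable_pt_lim (quot_deriv P Q 0) y (quot_deriv P Q 1 y))
    by (eapply quot_rule; [exact HQ | exact HQy | apply pder1_spec, HP | reflexivity]).
  enough (derivable_pt_lim (quot_deriv P Q k) y (quot_deriv P Q (S k) y) /\
          derivable_pt_lim (quot_deriv P Q (S k)) y (quot_deriv P Q (S (S k)) y)) by tauto.
  induction k as [|k [IH1 IH2]].
  - split; [exact H0|].
    eapply quot_rule; [exact HQ | exact HQy | |].
    + apply (derivable_pt_lim_minus (pder1 P) (fun z => pder1 Q z * quot_deriv P Q 0 z)).
      * apply pder1_derivable.
      * exact (derivable_pt_lim_mult (pder1 Q) (quot_deriv P Q 0) y _ _ (pder1_derivable Q y) H0).
    + rewrite quot_deriv_SS. cbn [quot_deriv INR]. field. exact HQy.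
  - split; [exact IH2|].
    assert (Hscal := derivable_pt_lim_scal (pder1 Q) (INR (S (S k))) y _ (pder1_derivable Q y)).
    change (quot_deriv P Q (S (S k))) with
      (fun z => ((match k with 0 => 2 * nth 2 P 0 | _ => 0 end)
                 - INR (S (S k)) * pder1 Q z * quot_deriv P Q (S k) z
                 - INR (S (S k)) * INR (S k) * nth 2 Q 0 * quot_deriv P Q k z) / peval Q z).
    eapply quot_rule; [exact HQ | exact HQy | |].
    + apply derivable_pt_lim_minus; [apply derivable_pt_lim_minus|].
      * apply derivable_pt_lim_const.
      * exact (derivable_pt_lim_mult _ (quot_deriv P Q (S k)) y _ _ Hscal IH2).
      * exact (derivable_pt_lim_mult (fun _ => INR (S (S k)) * INR (S k) * nth 2 Q 0)
                 (quot_deriv P Q k) y _ _ (derivable_pt_lim_const _ y) IH1).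
    + rewrite <- (quot_deriv_SS P Q k y), quot_deriv_SS. unfold mult_real_fct.
      rewrite !S_INR. field. exact HQy.
Qed.

Lemma quot_deriv_nderiv (U : R -> Prop) k : (forall y, U y -> peval Q y <> 0) ->
  nderiv U k (fun y => peval P y / peval Q y) (quot_deriv P Q k).
Proof.
  intros HU. induction k as [|k IH]; [apply nderiv0|].
  apply (nderivS U k _ (quot_deriv P Q k)); [exact IH|].
  intros y Hy. exact (quot_deriv_derivable k y (HU y Hy)).
Qed.

End QuadraticQuotient.

Lemma abs_mono_at_of_derivs (P Q : Defs.poly) x : deg_le P 2 -> deg_le Q 2 ->
  peval Q x <> 0 -> (forall k, 0 <= quot_deriv P Q k x) -> abs_mono_at P Q x.
Proof.
  intros HP HQ HQx Hpos. split; [exact HQx|]. intro k.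
  assert (HD := quot_deriv_nderiv P Q HP HQ (fun y => peval Q y <> 0) k (fun _ H => H)).
  split; [exists (quot_deriv P Q k); exact HD|].
  intros g Hg.
  rewrite (nderiv_agree _ (peval_nonzero_open Q) k _ _ g (quot_deriv P Q k)
             (fun _ _ => eq_refl) Hg HD x HQx).
  apply Hpos.
Qed.

(* Absolute monotonicity is a property of the rational function: if P/Q = P1/Q1 with
   P1, Q1 quadratics without common real root, then on [-r, 0] the poles of P1/Q1 are
   absent and all derivatives of P1/Q1 are nonnegative. *)
Lemma am_on_derivs (P Q P1 Q1 : Defs.poly) r x :
  deg_le Q 2 -> poly_nonzero Q -> deg_le P1 2 -> deg_le Q1 2 ->
  (forall y, peval P1 y = 0 -> peval Q1 y = 0 -> False) ->
  (forall y, peval P y * peval Q1 y = peval P1 y * peval Q y) ->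
  am_on P Q r -> -r <= x <= 0 ->
  peval Q1 x <> 0 /\ forall k, 0 <= quot_deriv P1 Q1 k x.
Proof.
  intros HdQ HnQ HdP1 HdQ1 Hnocommon Hrel [P0 [Q0 [[U [V HB]] [_ [HPQ Habs]]]]] Hx.
  assert (Hid : forall y, peval P0 y * peval Q1 y = peval P1 y * peval Q0 y).
  { intro y. apply Rminus_diag_uniq. revert y.
    apply (vanish_off_roots _ Q); [| exact HdQ | exact HnQ |].
    - intro y. apply continuity_pt_minus; apply continuity_pt_mult; apply peval_continuity.
    - intros y HQy. apply (Rmult_eq_reg_l (peval Q y)); [|exact HQy].
      transitivity (peval Q1 y * (peval P0 y * peval Q y - peval P y * peval Q0 y)
                    + peval Q0 y * (peval P y * peval Q1 y - peval P1 y * peval Q y)); [ring|].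
      rewrite HPQ, Hrel. ring. }
  assert (Hpoles : forall y, peval Q0 y <> 0 -> peval Q1 y <> 0).
  { intros y Hy Hz. apply (Hnocommon y); [|exact Hz].
    specialize (Hid y). rewrite Hz, Rmult_0_r in Hid.
    apply (Rmult_eq_reg_r (peval Q0 y)); [lra | exact Hy]. }
  assert (Hpoles' : forall y, peval Q1 y <> 0 -> peval Q0 y <> 0).
  { intros y Hy Hz. specialize (Hid y). rewrite Hz, Rmult_0_r in Hid.
    assert (HP0 : peval P0 y = 0) by (apply (Rmult_eq_reg_r (peval Q1 y)); [lra | exact Hy]).
    specialize (HB y). rewrite HP0, Hz in HB. lra. }
  assert (Hquot : forall y, peval Q0 y <> 0 ->
                    peval P0 y / peval Q0 y = peval P1 y / peval Q1 y).
  { intros y Hy. assert (Hy1 := Hpoles y Hy). specialize (Hid y).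
    field_simplify_eq; [lra | split; assumption]. }
  destruct (Habs x Hx) as [HQ0x Hk].
  split; [exact (Hpoles x HQ0x)|]. intro k.
  destruct (Hk k) as [[g Hg] Hnonneg].
  rewrite <- (nderiv_agree _ (peval_nonzero_open Q0) k _ _ g (quot_deriv P1 Q1 k) Hquot Hg
               (quot_deriv_nderiv P1 Q1 HdP1 HdQ1 _ k Hpoles) x HQ0x).
  exact (Hnonneg g Hg).
Qed.

Notation psi_deriv a := (quot_deriv (Pa a) (Qa a)).

Lemma Pa_deg a : deg_le (Pa a) 2.
Proof. unfold deg_le, Pa. simpl. lia. Qed.

Lemma Qa_deg a : deg_le (Qa a) 2.
Proof. unfold deg_le, Qa. simpl. lia. Qed.

Lemma Qa_nonzero a : poly_nonzero (Qa a).
Proof. exists 0%nat. simpl. lra. Qed.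

(* psi_a is in lowest terms over the reals: Pa a - Qa a = y (1 + (a + 1/2) y), and at
   y = -1/(a + 1/2) one finds (a + 1/2)^2 Qa a (y) = 1/12. *)
Lemma Pa_Qa_no_common_root a y : peval (Pa a) y = 0 -> peval (Qa a) y = 0 -> False.
Proof.
  unfold Pa, Qa. simpl. intros HP HQ.
  assert (Hdiff : y * (1 + (a + 1 / 2) * y) = 0) by lra.
  apply Rmult_integral in Hdiff. destruct Hdiff as [Hy|Hy].
  - subst y. lra.
  - assert (Hmy : y * (a + 1 / 2) = -1) by lra.
    assert (E : (a + 1 / 2) ^ 2 * (1 + y * (a + y * (- a / 2 - 1 / 6 + y * 0)))
                = (a + 1 / 2) ^ 2 + a * (a + 1 / 2) * (y * (a + 1 / 2))
                  + (- a / 2 - 1 / 6) * (y * (a + 1 / 2)) ^ 2) by ring.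
    rewrite Hmy, HQ in E. nra.
Qed.

Lemma psi_in_Pi a : in_Pi 2 2 3 (Pa a) (Qa a).
Proof.
  split; [apply Pa_deg|]. split; [apply Qa_deg|]. split; [apply Qa_nonzero|].
  apply (order3_of_defect _ _ [- (a / 6 + (- a / 2 - 1 / 6) / 2); - (- a / 2 - 1 / 6) / 6]).
  - simpl. lra.
  - intro z. unfold Pa, Qa, T3. simpl. field.
Qed.

Lemma psi_deriv_at0_low a :
  psi_deriv a 0 0 = 1 /\ psi_deriv a 1 0 = 1 /\ psi_deriv a 2 0 = 1 /\ psi_deriv a 3 0 = 1.
Proof.
  cbn [quot_deriv INR]. unfold pder1, Pa, Qa. simpl. repeat split; field.
Qed.

(* At 0 the Leibniz recursion has constant coefficients (Qa a (0) = 1, Qa a '(0) = a). *)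
Lemma psi_deriv_at0_rec a k :
  psi_deriv a (S (S (S k))) 0 =
  - INR (S (S (S k))) * a * psi_deriv a (S (S k)) 0
  - INR (S (S (S k))) * INR (S (S k)) * (- a / 2 - 1 / 6) * psi_deriv a (S k) 0.
Proof. rewrite quot_deriv_SS. unfold pder1, Qa. cbn [peval nth]. field. Qed.

(* A nonnegative sequence cannot satisfy v(j+2) = A v(j+1) - B v(j) with v(0) > 0
   when the characteristic roots are non-real (A^2 < 4B): the ratios v(j+1)/v(j)
   would decrease by at least 2 sqrt B - A > 0 at each step. *)
Lemma complex_recurrence_sign_change (v : nat -> R) A B : 0 < B -> A * A < 4 * B ->
  0 < v 0%nat -> (forall j, v (S (S j)) = A * v (S j) - B * v j) ->
  ~ (forall j, 0 <= v j).
Proof.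
  intros HB HAB Hv0 Hrec Hpos.
  set (s := sqrt B).
  assert (Hs : 0 < s) by (apply sqrt_lt_R0; lra).
  assert (Hs2 : s * s = B) by (apply sqrt_sqrt; lra).
  set (dl := 2 * s - A).
  assert (Hdl : 0 < dl) by (unfold dl; destruct (Rle_lt_dec A 0); nra).
  set (T := v 1%nat / v 0%nat).
  (* invariant: v n > 0 and v(n+1) <= (T - n dl) v(n) *)
  assert (Hinv : forall n, 0 < v n /\ v (S n) <= (T - INR n * dl) * v n).
  { induction n as [|n [IH1 IH2]].
    - split; [exact Hv0|]. simpl. unfold T. right. field. lra.
    - set (t := T - INR n * dl) in *.
      assert (H1 : 0 < v (S n)).
      { destruct (Hpos (S n)) as [H|H]; [exact H|]. exfalso.
        specialize (Hrec n). rewrite <- H in Hrec.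
        specialize (Hpos (S (S n))). nra. }
      assert (Ht : 0 < t) by nra.
      split; [exact H1|].
      rewrite S_INR. replace (T - (INR n + 1) * dl) with (t - dl) by (unfold t; ring).
      rewrite Hrec.
      assert (Hk : t * ((t - dl) * v (S n) - (A * v (S n) - B * v n)) >= 0).
      { replace (t * ((t - dl) * v (S n) - (A * v (S n) - B * v n)))
          with ((t - s) * (t - s) * v (S n) + s * s * (t * v n - v (S n)))
          by (unfold dl; rewrite <- Hs2; ring).
        assert (0 <= (t - s) * (t - s) * v (S n))
          by (apply Rmult_le_pos; [apply Rle_0_sqr | lra]).
        assert (0 <= s * s * (t * v n - v (S n))) by (apply Rmult_le_pos; nra).
        lra. }
      nra. }
  destruct (INR_archimed dl T Hdl) as [n Hn].
  destruct (Hinv n) as [H1 H2].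
  assert (0 < v (S n)) by apply (Hinv (S n)).
  nra.
Qed.

Lemma sqrt3_sq : sqrt 3 * sqrt 3 = 3.
Proof. apply sqrt_sqrt. lra. Qed.

Lemma sqrt3_bounds : 3 / 2 < sqrt 3 < 7 / 4.
Proof.
  assert (Hs := sqrt3_sq). assert (H0 : 0 <= sqrt 3) by apply sqrt_pos. nra.
Qed.

Lemma a_star_eq : a_star = -1 + sqrt 3 / 3.
Proof.
  unfold a_star. assert (Hs := sqrt3_sq). assert (Hb := sqrt3_bounds).
  field_simplify_eq; [|lra]. lra.
Qed.

Definition psi_fails_at (a x : R) : Prop :=
  peval (Qa a) x = 0 \/ exists k, psi_deriv a k x < 0.

(* For a < a_star some derivative of psi_a at 0 is negative: for a < -1 already
   psi^(4)(0) = 2a + 2 < 0; for -1 <= a < a_star the normalized derivatives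
   psi^(j+1)(0)/(j+1)! satisfy a recurrence with non-real characteristic roots. *)
Lemma psi_fails_left a : a < a_star -> psi_fails_at a 0.
Proof.
  intros Ha. right.
  destruct (psi_deriv_at0_low a) as [_ [D1 [D2 D3]]].
  destruct (Rlt_le_dec a (-1)) as [Hlt|Hge].
  - exists 4%nat. rewrite psi_deriv_at0_rec, D3, D2. simpl INR. lra.
  - apply NNPP. intro Hnone.
    set (v := fun j => psi_deriv a (S j) 0 / INR (Factorial.fact (S j))).
    assert (Hs := sqrt3_sq). assert (Hb := sqrt3_bounds).
    rewrite a_star_eq in Ha.
    apply (complex_recurrence_sign_change v (- a) (- a / 2 - 1 / 6)).
    + lra.
    + assert (0 <= a + 1 < sqrt 3 / 3) by lra. nra.
    + unfold v. rewrite D1. simpl. lra.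
    + intro j. unfold v. rewrite psi_deriv_at0_rec.
      assert (Hf := INR_fact_neq_0 (S j)).
      change (Factorial.fact (S (S (S j)))) with (S (S (S j)) * (S (S j) * Factorial.fact (S j)))%nat.
      change (Factorial.fact (S (S j))) with (S (S j) * Factorial.fact (S j))%nat.
      rewrite !mult_INR. field. repeat split; try exact Hf; apply not_0_INR; lia.
    + intro j. unfold v. apply Rmult_le_pos.
      * apply Rnot_lt_le. intro Hneg. apply Hnone. exists (S j). exact Hneg.
      * left. apply Rinv_0_lt_compat, INR_fact_lt_0.
Qed.

(* Numerator of psi_a' = N_a / Qa a ^ 2. *)
Definition Na (a : R) : Defs.poly := [1; 1 + 2 * a; a * a + a + 1 / 6].

Lemma psi_deriv1_eq a x : peval (Qa a) x <> 0 ->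
  psi_deriv a 1 x = peval (Na a) x / (peval (Qa a) x * peval (Qa a) x).
Proof.
  intros HQ. cbn [quot_deriv]. unfold pder1, Pa, Na.
  revert HQ. unfold Qa. cbn [peval nth]. intros HQ. field. contradict HQ. lra.
Qed.

(* For a_star < a <= 0, N_a(-(1 + sqrt 3)) < 0, so psi_a' < 0 (or psi_a has a pole)
   just to the right of -(1 + sqrt 3). *)
Lemma psi_fails_mid a : a_star < a <= 0 ->
  exists x, -(1 + sqrt 3) < x <= 0 /\ psi_fails_at a x.
Proof.
  intros Ha. rewrite a_star_eq in Ha.
  assert (Hs := sqrt3_sq). assert (Hb := sqrt3_bounds).
  assert (HN : peval (Na a) (-(1 + sqrt 3)) < 0).
  { unfold Na. cbn [peval]. set (s := sqrt 3) in *.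
    replace (1 + - (1 + s) * (1 + 2 * a + - (1 + s) * (a * a + a + 1 / 6 + - (1 + s) * 0)))
      with ((4 + 2 * s) * (a - (-1 + s / 3)) * (a - (2 * s - 3) / 3)) by (field_simplify; nra).
    assert (0 < (4 + 2 * s) * (a - (-1 + s / 3))) by (apply Rmult_lt_0_compat; lra).
    assert (a - (2 * s - 3) / 3 < 0) by lra.
    nra. }
  destruct (continuity_pt_neg_right (peval (Na a)) _ 1 (peval_continuity _ _) HN ltac:(lra))
    as [x [Hx HNx]].
  exists x. split; [lra|].
  destruct (Req_dec (peval (Qa a) x) 0) as [HQ|HQ]; [left; exact HQ|].
  right. exists 1%nat. rewrite (psi_deriv1_eq a x HQ).
  assert (0 < peval (Qa a) x * peval (Qa a) x) by (apply Rsqr_pos_lt; exact HQ).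
  apply Rdiv_neg_pos; assumption.
Qed.

(* For a > 0, Qa a changes sign on [-(1 + sqrt 3), 0], so psi_a has a pole there. *)
Lemma psi_fails_big a : 0 < a ->
  exists x, -(1 + sqrt 3) < x <= 0 /\ psi_fails_at a x.
Proof.
  intros Ha. assert (Hs := sqrt3_sq). assert (Hb := sqrt3_bounds).
  assert (HQ : peval (Qa a) (-(1 + sqrt 3)) < 0).
  { unfold Qa. cbn [peval]. set (s := sqrt 3) in *.
    replace (1 + - (1 + s) * (a + - (1 + s) * (- a / 2 - 1 / 6 + - (1 + s) * 0)))
      with (1 / 3 - s / 3 - a * (3 + 2 * s)) by (field_simplify; nra).
    nra. }
  assert (HQ0 : 0 < peval (Qa a) 0) by (unfold Qa; simpl; lra).
  destruct (IVT (peval (Qa a)) (-(1 + sqrt 3)) 0 (peval_continuity _) ltac:(lra) HQ HQ0)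
    as [x [Hx Hroot]].
  exists x. split; [|left; exact Hroot].
  split; [|lra]. destruct Hx as [[Hlt|Heq] _]; [exact Hlt|].
  rewrite <- Heq in Hroot. lra.
Qed.

Lemma psi_fails_inside a : a <> a_star ->
  exists x, -(1 + sqrt 3) < x <= 0 /\ psi_fails_at a x.
Proof.
  intros Ha. destruct (Rtotal_order a a_star) as [Hlt|[Heq|Hgt]]; [| contradiction |].
  - exists 0. split; [assert (H := sqrt3_bounds); lra | exact (psi_fails_left a Hlt)].
  - destruct (Rle_lt_dec a 0).
    + apply psi_fails_mid. lra.
    + apply psi_fails_big. lra.
Qed.

Lemma sqrt3_pow (s : R) n : s * s = 3 -> s ^ S (S n) = 3 * s ^ n.
Proof. intro H. simpl. rewrite <- H. ring. Qed.

Ltac sqrt3_identity :=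
  let Hs := fresh "Hs" in
  pose proof sqrt3_sq as Hs; set (s := sqrt 3) in *; clearbody s;
  field_simplify_eq; repeat rewrite (sqrt3_pow s _ Hs); simpl pow; ring.

(* At a = a_star, with t = 1 - c_star x, Qa = t^2 is a square and
   Pa = (1 + sqrt 3) t^2 + beta_star t + gamma_star. *)
Definition c_star : R := (3 - sqrt 3) / 6.
Definition beta_star : R := -3 * (1 + sqrt 3).
Definition gamma_star : R := 3 + 2 * sqrt 3.

Lemma c_star_pos : 0 < c_star.
Proof. unfold c_star. assert (H := sqrt3_bounds). lra. Qed.

Lemma star_Q x : peval (Qa a_star) x = (1 - c_star * x) * (1 - c_star * x).
Proof. unfold Qa. rewrite a_star_eq. unfold c_star. simpl. sqrt3_identity. Qed.

Lemma star_Qder x : pder1 (Qa a_star) x = -2 * c_star * (1 - c_star * x).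
Proof. unfold pder1, Qa. rewrite a_star_eq. unfold c_star. simpl. sqrt3_identity. Qed.

Lemma star_q2 : nth 2 (Qa a_star) 0 = c_star * c_star.
Proof. unfold Qa. rewrite a_star_eq. unfold c_star. simpl. sqrt3_identity. Qed.

Lemma star_p2 : nth 2 (Pa a_star) 0 = c_star * c_star * (1 + sqrt 3).
Proof. unfold Pa. rewrite a_star_eq. unfold c_star. simpl. sqrt3_identity. Qed.

Lemma star_P x : peval (Pa a_star) x =
  (1 + sqrt 3) * (1 - c_star * x) * (1 - c_star * x) + beta_star * (1 - c_star * x) + gamma_star.
Proof.
  unfold Pa. rewrite a_star_eq. unfold c_star, beta_star, gamma_star. simpl. sqrt3_identity.
Qed.

Lemma star_N x : peval (Na a_star) x =
  c_star * (beta_star * (1 - c_star * x) * (1 - c_star * x) + 2 * gamma_star * (1 - c_star * x)).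
Proof. unfold Na. rewrite a_star_eq. unfold c_star, beta_star, gamma_star. simpl. sqrt3_identity. Qed.

(* Derivatives of psi_(a_star) = (1 + sqrt 3) + beta / t + gamma / t^2 in terms of t:
   k! c^k (beta / t^(k+1) + (k+1) gamma / t^(k+2)) for k >= 1. *)
Definition star_deriv (k : nat) (t : R) : R :=
  INR (Factorial.fact k) * c_star ^ k
  * (beta_star / t ^ S k + INR (S k) * gamma_star / t ^ S (S k)).

(* The closed form satisfies the Leibniz recursion for Q = t^2, Q' = -2 c t, q2 = c^2. *)
Lemma star_deriv_rec k t : t <> 0 ->
  star_deriv (S (S k)) t =
  (0 - INR (S (S k)) * (-2 * c_star * t) * star_deriv (S k) t
     - INR (S (S k)) * INR (S k) * (c_star * c_star) * star_deriv k t) / (t * t).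
Proof.
  intros Ht. unfold star_deriv.
  change (Factorial.fact (S (S k))) with (S (S k) * (S k * Factorial.fact k))%nat.
  change (Factorial.fact (S k)) with (S k * Factorial.fact k)%nat.
  rewrite !mult_INR, !S_INR. simpl pow. field.
  repeat split; try exact Ht; apply pow_nonzero; exact Ht.
Qed.

Lemma psi_star_deriv x k : 1 - c_star * x <> 0 ->
  psi_deriv a_star (S k) x = star_deriv (S k) (1 - c_star * x).
Proof.
  intros Ht. set (t := 1 - c_star * x) in *.
  assert (HQ : peval (Qa a_star) x <> 0)
    by (rewrite star_Q; fold t; now apply Rmult_integral_contrapositive).
  assert (H1 : psi_deriv a_star 1 x = star_deriv 1 t).
  { rewrite (psi_deriv1_eq _ _ HQ), star_N, star_Q. fold t.
    unfold star_deriv. simpl. field. exact Ht. }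
  enough (psi_deriv a_star (S k) x = star_deriv (S k) t /\
          psi_deriv a_star (S (S k)) x = star_deriv (S (S k)) t) by tauto.
  induction k as [|k [IH1 IH2]].
  - split; [exact H1|].
    rewrite quot_deriv_SS, H1, star_deriv_rec by exact Ht.
    cbn [quot_deriv]. rewrite star_P, star_Q, star_Qder, star_q2, star_p2. fold t.
    unfold star_deriv. simpl. field. exact Ht.
  - split; [exact IH2|].
    rewrite quot_deriv_SS, IH1, IH2, (star_deriv_rec (S k)) by exact Ht.
    rewrite star_Q, star_Qder, star_q2. fold t. reflexivity.
Qed.

Lemma star_t_le x : - (1 + sqrt 3) <= x -> 1 - c_star * x <= 1 + sqrt 3 / 3.
Proof.
  intros Hx. assert (Hc := c_star_pos).
  replace (1 + sqrt 3 / 3) with (1 + c_star * (1 + sqrt 3))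
    by (unfold c_star; sqrt3_identity).
  nra.
Qed.

(* On [-(1 + sqrt 3), 0], where 1 <= t <= 1 + sqrt 3 / 3, every derivative of
   psi_(a_star) is nonnegative. *)
Lemma psi_star_nonneg x k : - (1 + sqrt 3) <= x <= 0 -> 0 <= psi_deriv a_star k x.
Proof.
  intros Hx. assert (Hc := c_star_pos). assert (Hb := sqrt3_bounds).
  assert (Ht1 : 1 <= 1 - c_star * x) by nra.
  assert (Ht2 := star_t_le x (proj1 Hx)).
  destruct k as [|k].
  - cbn [quot_deriv]. apply Rmult_le_pos.
    + unfold Pa. rewrite a_star_eq. simpl. assert (Hs := sqrt3_sq).
      set (s := sqrt 3) in *. nra.
    + left. apply Rinv_0_lt_compat. rewrite star_Q. nra.
  - rewrite psi_star_deriv by lra. set (t := 1 - c_star * x) in *.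
    unfold star_deriv. apply Rmult_le_pos.
    + apply Rmult_le_pos; [apply pos_INR | apply pow_le; lra].
    + assert (Hp : 0 < t ^ S (S (S k))) by (apply pow_lt; lra).
      replace (beta_star / t ^ S (S k) + INR (S (S k)) * gamma_star / t ^ S (S (S k)))
        with ((beta_star * t + INR (S (S k)) * gamma_star) / t ^ S (S (S k)))
        by (simpl; field; split; [apply pow_nonzero|]; lra).
      apply Rmult_le_pos; [|left; apply Rinv_0_lt_compat; exact Hp].
      assert (H2 : 2 <= INR (S (S k))) by (rewrite !S_INR; assert (H := pos_INR k); lra).
      unfold beta_star, gamma_star. assert (Hs := sqrt3_sq).
      assert (0 <= (INR (S (S k)) - 2) * (3 + 2 * sqrt 3)) by (apply Rmult_le_pos; lra).
      nra.
Qed.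

(* Beyond -(1 + sqrt 3), t > 1 + sqrt 3 / 3 and psi_(a_star)' < 0. *)
Lemma psi_star_fails_beyond x : x < - (1 + sqrt 3) -> psi_fails_at a_star x.
Proof.
  intros Hx. right. exists 1%nat.
  assert (Hc := c_star_pos). assert (Hb := sqrt3_bounds).
  assert (Ht : 1 + sqrt 3 / 3 < 1 - c_star * x).
  { replace (1 + sqrt 3 / 3) with (1 + c_star * (1 + sqrt 3))
      by (unfold c_star; sqrt3_identity).
    nra. }
  rewrite psi_star_deriv by lra. set (t := 1 - c_star * x) in *.
  assert (Hp : 0 < t * t * t) by (apply Rmult_lt_0_compat; [apply Rmult_lt_0_compat|]; lra).
  replace (star_deriv 1 t) with (c_star * (beta_star * t + 2 * gamma_star) / (t * t * t))
    by (unfold star_deriv; simpl; field; lra).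
  apply Rdiv_neg_pos; [|exact Hp].
  assert (beta_star * t + 2 * gamma_star < 0).
  { unfold beta_star, gamma_star. assert (Hs := sqrt3_sq).
    assert (0 < (1 + sqrt 3) * (t - (1 + sqrt 3 / 3))) by (apply Rmult_lt_0_compat; lra).
    nra. }
  nra.
Qed.

Lemma star_coprime : coprime_poly (Pa a_star) (Qa a_star).
Proof.
  exists [-6 + 11 / 3 * sqrt 3; 4 - 7 / 3 * sqrt 3], [7 - 11 / 3 * sqrt 3; 3 - 5 / 3 * sqrt 3].
  intro x. unfold Pa, Qa. rewrite a_star_eq. simpl. sqrt3_identity.
Qed.

Lemma psi_star_am r : r <= 1 + sqrt 3 -> am_on (Pa a_star) (Qa a_star) r.
Proof.
  intros Hr. exists (Pa a_star), (Qa a_star).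
  split; [exact star_coprime|]. split; [apply Qa_nonzero|]. split; [intros; ring|].
  intros x Hx. apply abs_mono_at_of_derivs; [apply Pa_deg | apply Qa_deg | |].
  - rewrite star_Q. assert (Hc := c_star_pos).
    assert (0 < 1 - c_star * x) by nra. apply Rmult_integral_contrapositive; lra.
  - intro k. apply psi_star_nonneg. lra.
Qed.

Lemma am_on_psi_no_failure a (P Q : Defs.poly) r x : deg_le Q 2 -> poly_nonzero Q ->
  (forall y, peval P y * peval (Qa a) y = peval (Pa a) y * peval Q y) ->
  am_on P Q r -> -r <= x <= 0 -> ~ psi_fails_at a x.
Proof.
  intros HdQ HnQ Hrel Ham Hx Hfail.
  destruct (am_on_derivs P Q (Pa a) (Qa a) r x HdQ HnQ (Pa_deg a) (Qa_deg a)
              (Pa_Qa_no_common_root a) Hrel Ham Hx) as [HQx Hpos].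
  destruct Hfail as [Hpole | [k Hk]]; [exact (HQx Hpole)|].
  specialize (Hpos k). lra.
Qed.

Lemma psi_radius_bound a : exists s, 0 <= s <= 1 + sqrt 3 /\ (a <> a_star -> s < 1 + sqrt 3) /\
  forall P Q r, deg_le Q 2 -> poly_nonzero Q ->
    (forall y, peval P y * peval (Qa a) y = peval (Pa a) y * peval Q y) ->
    am_on P Q r -> r <= s.
Proof.
  assert (Hb := sqrt3_bounds).
  destruct (Req_dec a a_star) as [->|Ha].
  - exists (1 + sqrt 3). split; [lra|]. split; [tauto|].
    intros P Q r HdQ HnQ Hrel Ham. apply Rnot_lt_le. intro Hr.
    apply (am_on_psi_no_failure a_star P Q r (-r) HdQ HnQ Hrel Ham); [lra|].
    apply psi_star_fails_beyond. lra.
  - destruct (psi_fails_inside a Ha) as [x [Hx Hfail]].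
    exists (-x). split; [lra|]. split; [intros _; lra|].
    intros P Q r HdQ HnQ Hrel Ham. apply Rnot_lt_le. intro Hr.
    exact (am_on_psi_no_failure a P Q r x HdQ HnQ Hrel Ham ltac:(lra) Hfail).
Qed.

Theorem mainTheorem13 :
  (* R_{2/2,3} = 1 + sqrt 3 *)
  is_lub (Rmnp_set 2 2 3) (1 + sqrt 3) /\
  (* every element of Pi_{2/2,3} is some psi_a *)
  (forall P Q, in_Pi 2 2 3 P Q ->
     exists a : R, forall x, peval P x * peval (Qa a) x = peval (Pa a) x * peval Q x) /\
  (* attained by a = -1 + 1/sqrt 3 *)
  is_lub (R_set (Pa a_star) (Qa a_star)) (1 + sqrt 3) /\
  (* strictly smaller otherwise *)
  (forall a : R, a <> a_star ->
     exists s, s < 1 + sqrt 3 /\ is_upper_bound (R_set (Pa a) (Qa a)) s).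
Proof.
  assert (Hb := sqrt3_bounds).
  assert (Hstar : is_lub (R_set (Pa a_star) (Qa a_star)) (1 + sqrt 3)).
  { split.
    - intros r [->|[_ Ham]]; [lra|].
      destruct (psi_radius_bound a_star) as [s [Hs [_ Hbound]]].
      specialize (Hbound _ _ r (Qa_deg _) (Qa_nonzero _) (fun _ => eq_refl) Ham). lra.
    - intros b Hub. apply Hub. right. split; [lra|]. apply psi_star_am. lra. }
  split; [|split; [exact Pi_classification | split; [exact Hstar|]]].
  - split.
    + intros r [->|[P [Q [HPi [_ Ham]]]]]; [lra|].
      destruct (Pi_classification P Q HPi) as [a Ha].
      destruct (psi_radius_bound a) as [s [Hs [_ Hbound]]].
      destruct HPi as [_ [HdQ [HnQ _]]].
      specialize (Hbound P Q r HdQ HnQ Ha Ham). lra.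
    + intros b Hub. apply Hub. right. exists (Pa a_star), (Qa a_star).
      split; [apply psi_in_Pi|]. split; [lra|]. apply psi_star_am. lra.
  - intros a Ha. destruct (psi_radius_bound a) as [s [Hs [Hlt Hbound]]].
    exists s. split; [exact (Hlt Ha)|].
    intros r [->|[_ Ham]]; [lra|].
    exact (Hbound _ _ r (Qa_deg a) (Qa_nonzero a) (fun _ => eq_refl) Ham).
Qed.
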